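(* Let $(M,d)$ be a metric space, $\mathsf{P}\subseteq M$ a set of $n$ points, $1\le \ell\le k\le n$ integers, $m=\lfloor k/\ell\rfloor$, and $c\ge1$. Let $Q=\{q_1,\dots,q_m\}\subseteq\mathsf{P}$ satisfy $\sum_{p\in\mathsf{P}} d_Q(p,1)\le c\,\sigma_{\mathrm{med}}$, where $\sigma_{\mathrm{med}}=\min_{S\subseteq\mathsf{P},|S|=m}\sum_{p\in\mathsf{P}} d_S(p,1)$. Let $C\subseteq\mathsf{P}$ with $|C|=k$ and $C\supseteq\bigcup_{i=1}^m N_{\mathsf{P}}(q_i,\ell)$, and let $\sigma_{\mathrm{alg}}=\sum_{p\in\mathsf{P}} d_C(p,\ell)$ and $\sigma_{\mathrm{opt}}=\min_{C'\subseteq\mathsf{P},|C'|=k}\sum_{p\in\mathsf{P}} d_{C'}(p,\ell)$. Then $\sigma_{\mathrm{alg}}\le \sigma_{\mathrm{opt}}+2c\,\sigma_{\mathrm{med}}$.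
   Context: For a finite set $S\subseteq M$, a point $p\in M$ and an integer $1\le i\le |S|$, $d_S(p,i)$ denotes the radius of the smallest closed ball centered at $p$ containing at least $i$ points of $S$. The $i$ nearest neighbors of $p$ in $S$ are determined by ordering $s\in S$ lexicographically by $(d(p,s),\text{index of }s)$; $N_S(p,i)$ is the set of the first $i$ points in this order, so $|N_S(p,i)|=i$. *)

From HB Require Import structures.
From mathcomp Require Import all_boot all_order all_algebra.
Set Implicit Arguments. Unset Strict Implicit. Unset Printing Implicit Defensive.
Import Order.TTheory GRing.Theory Num.Theory.
Local Open Scope ring_scope.

Definition is_metric (R : realFieldType) (M : Type) (d : M -> M -> R) : Prop :=
  [/\ forall x y, 0 <= d x y,
      forall x y, d x y = 0 <-> x = y,
      forall x y, d x y = d y x &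
      forall x y z, d x z <= d x y + d y z].

Definition seqmin (R : realFieldType) (s : seq R) : R :=
  foldr Order.min (head 0 s) s.

Section Knn.
Variables (R : realFieldType) (M : Type) (d : M -> M -> R) (n : nat)
          (pts : 'I_n -> M).
(* The point set P = {pts i | i < n}; the index of pts i is i. *)

Definition pd (x y : 'I_n) : R := d (pts x) (pts y).

(* d_S(p,i): radius of the smallest closed ball centered at p containing at
   least i points of S.  The smallest such radius is always one of the
   distances d(p,s), s in S, so it is the minimum of those distances r with
   #{t in S | d(p,t) <= r} >= i. *)
Definition dS (S : {set 'I_n}) (p : 'I_n) (i : nat) : R :=
  seqmin [seq pd p s | s <- enum S & leq i #|[set t in S | pd p t <= pd p s]|].

Definition knn_lt (p s t : 'I_n) : bool :=
  (pd p s < pd p t) || ((pd p s == pd p t) && (nat_of_ord s < nat_of_ord t)%N).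

Definition NS (S : {set 'I_n}) (p : 'I_n) (i : nat) : {set 'I_n} :=
  [set s in S | (#|[set t in S | knn_lt p t s]| < i)%N].

Definition cost (S : {set 'I_n}) (i : nat) : R := \sum_(p : 'I_n) dS S p i.

Definition optcost (j i : nat) : R :=
  seqmin [seq cost X i | X <- enum [set X : {set 'I_n} | #|X| == j]].
End Knn.

From HB Require Import structures.
From mathcomp Require Import all_boot all_order all_algebra.
From mathcomp Require Import lra.
Import Order.TTheory GRing.Theory Num.Theory.
Set Implicit Arguments. Unset Strict Implicit.
Local Open Scope ring_scope.

(* Fix p in P and let q in Q be its nearest centre, so that
   d_Q(p,1) = d(p,q).  The l nearest neighbours N_P(q,l) lie in C and within
   d_P(q,l) of q, hence within d(p,q) + d_P(q,l) of p; thus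
   d_C(p,l) <= d(p,q) + d_P(q,l).  Conversely, for any X of size k the ball of
   radius d_X(p,l) around p holds l points of X, which are within
   d(q,p) + d_X(p,l) of q; thus d_P(q,l) <= d(q,p) + d_X(p,l).  Together,
   d_C(p,l) <= d_X(p,l) + 2 d_Q(p,1); summing over p with X optimal gives
   sigma_alg <= sigma_opt + 2 sigma(Q) <= sigma_opt + 2 c sigma_med. *)

Section SeqMin.
Variable R : realFieldType.

Lemma seqmin_le (s : seq R) x : x \in s -> seqmin s <= x.
Proof.
case: s => // y s xs; rewrite /seqmin /=.
suff min_le (a : R) (t : seq R) (z : R) : z \in a :: t -> foldr Order.min a t <= z.
  by apply: (min_le y (y :: s)); rewrite inE xs orbT.
elim: t z => [|w t IH] z /=; first by rewrite inE => /eqP->.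
rewrite !inE ge_min => /orP[/eqP->|/orP[/eqP->|zt]].
- by rewrite IH ?orbT // inE eqxx.
- by rewrite lexx.
- by rewrite IH ?orbT // inE zt orbT.
Qed.

Lemma seqmin_in (s : seq R) : s != [::] -> seqmin s \in s.
Proof.
case: s => // y s _; rewrite /seqmin /=.
suff : foldr Order.min y s \in y :: s.
  by rewrite minEle; case: ifP => _; rewrite !inE ?eqxx // => ->; rewrite orbT.
elim: s => [|z s IH] /=; first by rewrite inE.
rewrite minEle; case: ifP => _; first by rewrite !inE eqxx orbT.
by move: IH; rewrite !inE => /orP[->|->]; rewrite ?orbT.
Qed.
End SeqMin.

Lemma card_lt_ord (n m : nat) : (m <= n)%N -> #|[set j : 'I_n | (j < m)%N]| = m.
Proof.
move=> mn; have -> : [set j : 'I_n | (j < m)%N] = [set widen_ord mn j | j : 'I_m].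
  apply/setP => j; rewrite !inE; apply/idP/imsetP => [jm|[j' _ ->]].
  - by exists (Ordinal jm) => //; apply: val_inj.
  - by rewrite /= ltn_ord.
rewrite card_imset ?card_ord // => a b /(congr1 val) /= eq_ab.
exact: val_inj.
Qed.

Section Radius.
Variables (R : realFieldType) (M : Type) (d : M -> M -> R) (n : nat)
          (pts : 'I_n -> M).
Local Notation pd := (pd d pts).
Local Notation dS := (dS d pts).

Definition ball (S : {set 'I_n}) (p : 'I_n) (r : R) : {set 'I_n} :=
  [set t in S | pd p t <= r].

Lemma in_ball S p r t : (t \in ball S p r) = (t \in S) && (pd p t <= r).
Proof. by rewrite inE. Qed.

Lemma farthest (A : {set 'I_n}) p : A != set0 ->
  exists2 s, s \in A & forall t, t \in A -> pd p t <= pd p s.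
Proof. by case/set0Pn => s0 s0A; case: (arg_maxP (pd p) s0A) => s; exists s. Qed.

Lemma dS_le (S : {set 'I_n}) p i r :
  (0 < i)%N -> (i <= #|ball S p r|)%N -> dS S p i <= r.
Proof.
move=> i_gt0 iB; have [s sB smax] : exists2 s, s \in ball S p r &
    forall t, t \in ball S p r -> pd p t <= pd p s.
  by apply: farthest; rewrite -card_gt0 (leq_trans i_gt0 iB).
move: (sB); rewrite in_ball => /andP[sS spr]; apply: le_trans spr.
apply/seqmin_le/map_f; rewrite mem_filter mem_enum sS andbT.
apply: leq_trans iB (subset_leq_card _); apply/subsetP => t tB.
by move: (tB); rewrite !in_ball => /andP[-> _]; rewrite smax.
Qed.

Lemma dS_witness (S : {set 'I_n}) p i : (0 < i)%N -> (i <= #|S|)%N ->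
  exists2 s, s \in S & dS S p i = pd p s /\ (i <= #|ball S p (pd p s)|)%N.
Proof.
move=> i_gt0 iS.
set L := [seq pd p s | s <- enum S & (i <= #|ball S p (pd p s)|)%N].
have : L != [::].
  have [s sS smax] : exists2 s, s \in S & forall t, t \in S -> pd p t <= pd p s.
    by apply: farthest; rewrite -card_gt0 (leq_trans i_gt0 iS).
  suff : pd p s \in L by case: (L).
  apply: map_f; rewrite mem_filter mem_enum sS andbT.
  apply: leq_trans iS (subset_leq_card _); apply/subsetP => t tS.
  by rewrite in_ball tS smax.
move/seqmin_in; rewrite -/(dS S p i) => /mapP[s].
by rewrite mem_filter mem_enum => /andP[iB sS] ->; exists s.
Qed.

Lemma dS_ball (S : {set 'I_n}) p i :
  (0 < i)%N -> (i <= #|S|)%N -> (i <= #|ball S p (dS S p i)|)%N.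
Proof. by move=> i_gt0 iS; have [s _ [-> ]] := dS_witness p i_gt0 iS. Qed.

Hypothesis dtri : forall x y z, d x z <= d x y + d y z.

Lemma dS_shift (S A : {set 'I_n}) p q i r :
  (0 < i)%N -> A \subset S -> (i <= #|A|)%N ->
  (forall t, t \in A -> pd q t <= r) -> dS S p i <= pd p q + r.
Proof.
move=> i_gt0 AS iA Aq; apply: dS_le => //.
apply: leq_trans iA (subset_leq_card _); apply/subsetP => t tA.
rewrite in_ball (subsetP AS _ tA) /=.
by apply: le_trans (dtri _ (pts q) _) _; rewrite lerD2l Aq.
Qed.

Lemma dS_lipschitz (X S : {set 'I_n}) p q i :
  (0 < i)%N -> (i <= #|X|)%N -> X \subset S -> dS S q i <= pd q p + dS X p i.
Proof.
move=> i_gt0 iX XS; apply: (dS_shift (A := ball X p (dS X p i))) => //.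
- by apply: subset_trans XS; apply/subsetP => t; rewrite in_ball => /andP[].
- exact: dS_ball.
- by move=> t; rewrite in_ball => /andP[].
Qed.
End Radius.

Section Neighbours.
Variables (R : realFieldType) (M : Type) (d : M -> M -> R) (n : nat)
          (pts : 'I_n -> M).
Local Notation pd := (pd d pts).
Local Notation dS := (dS d pts).
Local Notation knn_lt := (knn_lt d pts).
Local Notation NS := (NS d pts).

Lemma knn_irr p s : knn_lt p s s = false.
Proof. by rewrite /knn_lt ltxx eqxx ltnn. Qed.

Lemma knn_trans p s t u : knn_lt p s t -> knn_lt p t u -> knn_lt p s u.
Proof.
rewrite /knn_lt => /orP[st|/andP[/eqP-> st]] /orP[tu|/andP[/eqP<- tu]].
- by rewrite (lt_trans st tu).
- by rewrite st.
- by rewrite tu.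
- by rewrite eqxx (ltn_trans st tu) orbT.
Qed.

Lemma knn_total p s t : s != t -> knn_lt p s t || knn_lt p t s.
Proof.
move=> st; rewrite /knn_lt; case: ltgtP => //= _.
by case: ltngtP => // /val_inj eq_st; rewrite eq_st eqxx in st.
Qed.

Definition rank p (s : 'I_n) : nat := #|[set t | knn_lt p t s]|.

Lemma rank_lt p s : (rank p s < n)%N.
Proof.
rewrite -[X in (_ < X)%N]card_ord -cardsT; apply: proper_card; apply/properP.
by split; [exact: subsetT | exists s; rewrite ?inE ?knn_irr].
Qed.

Lemma rank_inj p : injective (rank p).
Proof.
have rank_mono s t : knn_lt p s t -> (rank p s < rank p t)%N.
  move=> st; apply: proper_card; apply/properP; split.
    by apply/subsetP => u; rewrite !inE => us; apply: knn_trans us st.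
  by exists s; rewrite !inE ?knn_irr.
move=> s t eq_st; apply/eqP; apply: contraT => /(knn_total p) /orP[] /rank_mono;
  by rewrite eq_st ltnn.
Qed.

(* N_P(q,l) is the preimage of {0, ..., l-1} under the injective rank, so it
   has exactly l elements. *)
Lemma card_NS q l : (l <= n)%N -> #|NS [set: 'I_n] q l| = l.
Proof.
move=> ln; pose rk s : 'I_n := Ordinal (rank_lt q s).
have rk_inj : injective rk by move=> s t /(congr1 val) /rank_inj.
have -> : NS [set: 'I_n] q l = rk @^-1: [set j : 'I_n | (j < l)%N].
  apply/setP => s; rewrite !inE /= /rank.
  by congr (_ < l)%N; apply: eq_card => t; rewrite !inE.
by rewrite card_preimset ?card_lt_ord.
Qed.

(* Every point of N_P(q,l) lies within d_P(q,l) of q: a farther point would be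
   preceded by the l points of the ball of that radius. *)
Lemma NS_within q l t : (0 < l)%N -> (l <= n)%N ->
  t \in NS [set: 'I_n] q l -> pd q t <= dS [set: 'I_n] q l.
Proof.
move=> l_gt0 ln; rewrite inE in_setT /= ltnNge; apply: contraNT; rewrite -ltNge => far.
have lB := dS_ball d pts q l_gt0 (_ : (l <= #|[set: 'I_n]|)%N).
rewrite cardsT card_ord in lB; apply: leq_trans (lB ln) (subset_leq_card _).
apply/subsetP => u; rewrite in_ball !inE /= /knn_lt => uq.
by rewrite (le_lt_trans uq far).
Qed.
End Neighbours.

Section Cover.
Variables (R : realFieldType) (M : Type) (d : M -> M -> R) (n : nat)
          (pts : 'I_n -> M) (l : nat) (Q C : {set 'I_n}).
Hypotheses (dsym : forall x y, d x y = d y x)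
           (dtri : forall x y z, d x z <= d x y + d y z)
           (l_gt0 : (0 < l)%N) (ln : (l <= n)%N) (Q_gt0 : (0 < #|Q|)%N)
           (QC : forall q, q \in Q -> NS d pts [set: 'I_n] q l \subset C).

Lemma dS_cover_bound (X : {set 'I_n}) p : (l <= #|X|)%N ->
  dS d pts C p l <= dS d pts X p l + 2 * dS d pts Q p 1.
Proof.
move=> lX; have [q qQ [-> _]] := dS_witness d pts p (ltn0Sn 0) Q_gt0.
have nearC : dS d pts C p l <= pd d pts p q + dS d pts [set: 'I_n] q l.
  apply: (dS_shift dtri (A := NS d pts [set: 'I_n] q l)) => //.
  - exact: QC.
  - by rewrite card_NS.
  - by move=> t; apply: NS_within.
have nearX : dS d pts [set: 'I_n] q l <= pd d pts q p + dS d pts X p l.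
  exact: (dS_lipschitz pts dtri p q l_gt0 lX (subsetT X)).
by rewrite /pd dsym in nearC nearX *; lra.
Qed.
End Cover.

Lemma optcost_attained (R : realFieldType) (M : Type) (d : M -> M -> R) (n : nat)
  (pts : 'I_n -> M) (j i : nat) : (j <= n)%N ->
  exists2 X : {set 'I_n}, #|X| = j & optcost d pts j i = cost d pts X i.
Proof.
move=> jn; set L := [seq cost d pts X i | X <- enum [set X : {set 'I_n} | #|X| == j]].
have : L != [::].
  suff : cost d pts [set s : 'I_n | (s < j)%N] i \in L by case: (L).
  by apply: map_f; rewrite mem_enum inE card_lt_ord.
by move/seqmin_in => /mapP[X]; rewrite mem_enum inE => /eqP; exists X.
Qed.

Theorem claim1 (R : realFieldType) (M : Type) (d : M -> M -> R)
  (hd : is_metric d) (n : nat) (pts : 'I_n -> M) (hinj : injective pts)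
  (l k : nat) (hl : (1 <= l)%N) (hlk : (l <= k)%N) (hkn : (k <= n)%N)
  (c : R) (hc : 1 <= c)
  (Q : {set 'I_n}) (hQ : #|Q| = (k %/ l)%N)
  (hQc : cost d pts Q 1 <= c * optcost d pts (k %/ l) 1)
  (C : {set 'I_n}) (hC : #|C| = k)
  (hNC : forall q, q \in Q -> NS d pts [set: 'I_n] q l \subset C) :
  cost d pts C l <= optcost d pts k l + 2 * c * optcost d pts (k %/ l) 1.
Proof.
case: hd => _ _ dsym dtri.
have ln : (l <= n)%N := leq_trans hlk hkn.
have Q_gt0 : (0 < #|Q|)%N by rewrite hQ divn_gt0.
have [X hX ->] := optcost_attained d pts l hkn.
have sum_bound : cost d pts C l <= cost d pts X l + 2 * cost d pts Q 1.
  rewrite /cost mulr_sumr -big_split /=; apply: ler_sum => p _.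
  by apply: (dS_cover_bound dsym dtri) => //; rewrite hX.
by apply: le_trans sum_bound _; rewrite -mulrA lerD2l ler_wpM2l.
Qed.
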